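(* In the setting of the sensorless induction machine (scaled model with state $(\tilde i_{s\alpha},\tilde i_{s\beta},\tilde\psi_{r\alpha},\tilde\psi_{r\beta},\omega_e,T_r)$, output $\tilde{\mathcal{I}}_s$, and $6\times6$ observability matrix $\mathcal{O}(x)$ formed from the gradients of $\tilde{\mathcal{I}}_s$, $\mathcal{L}_f\tilde{\mathcal{I}}_s$, $\mathcal{L}_f^2\tilde{\mathcal{I}}_s$), assume the rotor flux $\Psi_r=(\psi_{r\alpha},\psi_{r\beta})$ is nonzero and let $\omega_s=\frac{d}{dt}\angle\Psi_r=\frac{d}{dt}\arctan\frac{\psi_{r\beta}}{\psi_{r\alpha}}$ be the angular velocity of the rotor flux vector (along the model). Then $\det\mathcal{O}(x)\neq0$ if and only if $$\frac{d}{dt}\arctan(\tau_r\omega_e)+\omega_s\neq0 .$$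
   Context: Scaled model: $\dot{\tilde{\mathcal{I}}}_s=\mathcal{V}_s+a\tilde{\mathcal{I}}_s+\gamma\tilde\Psi_r$, $\dot{\tilde\Psi}_r=-\gamma\tilde\Psi_r-(a-b)\tilde{\mathcal{I}}_s$, $\dot\omega_e=\frac{c}{J}\tilde{\mathcal{I}}_s^T\mathbf{J}_2\tilde\Psi_r-\frac{p}{J}T_r$, $\dot T_r=0$, with $\gamma=\frac{1}{\tau_r}\mathbf{I}_2-\omega_e\mathbf{J}_2$, $\mathbf{J}_2=\begin{bmatrix}0&-1\\1&0\end{bmatrix}$, $a=-R_\sigma/L_\sigma$, $b=-R_s/L_\sigma$, $c=p^2/L_\sigma$, $\tau_r=L_r/R_r>0$, $\tilde\Psi_r=k_r\Psi_r$, $\tilde{\mathcal{I}}_s=L_\sigma\mathcal{I}_s$, $p,J>0$. The rows of $\mathcal{O}(x)$ are the gradients, with respect to the state, of $\tilde i_{s\alpha},\tilde i_{s\beta}$ and of their first and second Lie derivatives along the model; $\frac{d}{dt}\arctan(\tau_r\omega_e)=\frac{\tau_r\dot\omega_e}{1+\tau_r^2\omega_e^2}$. *)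

From Stdlib Require Import Reals ClassicalEpsilon.
Open Scope R_scope.

(* A state x = (i_sa, i_sb, psi_ra, psi_rb, omega_e, T_r) of the scaled model
   is encoded as  x : nat -> R  with components x 0, ..., x 5
   (scaled stator current, scaled rotor flux, electrical speed, load torque).
   Components with index >= 6 are irrelevant. *)
Definition vec := nat -> R.

Definition upd (x : vec) (j : nat) (t : R) : vec :=
  fun k => if Nat.eqb k j then t else x k.

Definition deriv_at (g : R -> R) (t : R) : R :=
  epsilon (inhabits 0) (fun l => derivable_pt_lim g t l).

Definition partial (h : vec -> R) (j : nat) (x : vec) : R :=
  deriv_at (fun t => h (upd x j t)) (x j).

Definition lie (f : vec -> vec) (h : vec -> R) (x : vec) : R :=
  sum_f_R0 (fun j => partial h j x * f x j) 5.

(* Scaled induction-machine model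
     d/dt I  = V + a I + gamma Psi
     d/dt Psi = - gamma Psi - (a - b) I
     d/dt w  = c/J I^T J2 Psi - p/J T
     d/dt T  = 0
   with gamma = (1/tau_r) I_2 - w J2, J2 = [[0,-1],[1,0]],
   so J2 (u1,u2) = (-u2, u1), and (gamma Psi) = (psa/tau_r + w psb, psb/tau_r - w psa).
   The input V = (v1, v2) is a (known) constant input. *)
Definition im_field (a b c p J tau_r v1 v2 : R) (x : vec) : vec :=
  let isa := x 0%nat in let isb := x 1%nat in
  let psa := x 2%nat in let psb := x 3%nat in
  let w := x 4%nat in let T := x 5%nat in
  let gpa := psa / tau_r - w * (- psb) in
  let gpb := psb / tau_r - w * psa in
  fun k => match k with
  | 0%nat => v1 + a * isa + gpa
  | 1%nat => v2 + a * isb + gpb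
  | 2%nat => - gpa - (a - b) * isa
  | 3%nat => - gpb - (a - b) * isb
  | 4%nat => c / J * (isa * (- psb) + isb * psa) - p / J * T
  | _ => 0
  end.

Definition coord (j : nat) : vec -> R := fun x => x j.

Definition obs_fun (f : vec -> vec) (i : nat) : vec -> R :=
  match i with
  | 0%nat => coord 0
  | 1%nat => coord 1
  | 2%nat => lie f (coord 0)
  | 3%nat => lie f (coord 1)
  | 4%nat => lie f (lie f (coord 0))
  | _ => lie f (lie f (coord 1))
  end.

Definition obs_matrix (f : vec -> vec) (x : vec) : nat -> nat -> R :=
  fun i j => partial (obs_fun f i) j x.

Definition minor (M : nat -> nat -> R) (j : nat) : nat -> nat -> R :=
  fun r c => M (S r) (if Nat.ltb c j then c else S c).

Fixpoint det (n : nat) (M : nat -> nat -> R) : R :=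
  match n with
  | O => 1
  | S n' => sum_f_R0 (fun j => (-1) ^ j * M O j * det n' (minor M j)) n'
  end.

Definition dt_atan_tau_w (f : vec -> vec) (tau_r : R) (x : vec) : R :=
  lie f (fun y => atan (tau_r * y 4%nat)) x.

(* angular velocity of the rotor flux vector along the model:
   w_s = d/dt angle(Psi) = (psa * d/dt psb - psb * d/dt psa) / (psa^2 + psb^2)
   (= d/dt arctan(psb/psa) wherever psa <> 0). *)
Definition omega_s (f : vec -> vec) (x : vec) : R :=
  (x 2%nat * lie f (coord 3) x - x 3%nat * lie f (coord 2) x)
  / (x 2%nat ^ 2 + x 3%nat ^ 2).

(* The first two rows of O(x) are the unit rows e_1, e_2, so det O(x) is the
   4x4 minor formed by the gradients of L_f I_s and L_f^2 I_s with respect to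
   (psi_r, omega_e, T_r).  Expanding it gives
     det O(x) = p/J (1/tau_r^2 + omega_e^2) |Psi_r|^2
                (d/dt arctan(tau_r omega_e) + omega_s),
   and the prefactor is positive as soon as Psi_r <> 0. *)
From Stdlib Require Import Reals ClassicalEpsilon FunctionalExtensionality.
From Stdlib Require Import Lia Lra Psatz.
From Coquelicot Require Import Coquelicot.
Open Scope R_scope.

Lemma partial_is_derive h j x l :
  is_derive (fun t => h (upd x j t)) (x j) l -> partial h j x = l.
Proof.
  intro Hl. apply is_derive_Reals in Hl.
  apply (uniqueness_limite (fun t => h (upd x j t)) (x j)); [|exact Hl].
  apply (epsilon_spec (inhabits 0)
           (fun l => derivable_pt_lim (fun t => h (upd x j t)) (x j) l)).
  exists l; exact Hl.
Qed.

Ltac partial_eval :=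
  repeat match goal with |- context [partial ?h ?j ?x] =>
    erewrite (partial_is_derive h j x)
      by (cbv beta iota zeta delta [upd im_field coord Nat.eqb];
          auto_derive; repeat first [exact I | reflexivity | split])
  end.

Lemma partial_coord k j x :
  partial (coord k) j x = if Nat.eqb k j then 1 else 0.
Proof.
  apply partial_is_derive. unfold coord, upd.
  destruct (Nat.eqb k j); auto_derive; auto.
Qed.

Lemma lie_coord f k x : (k <= 5)%nat -> lie f (coord k) x = f x k.
Proof.
  intro Hk. unfold lie. simpl. rewrite !partial_coord.
  do 6 (destruct k as [|k]; [simpl; ring|]). lia.
Qed.

Lemma sum_f_R0_head n (g : nat -> R) :
  (forall j, (0 < j <= n)%nat -> g j = 0) -> sum_f_R0 g n = g 0%nat.
Proof.
  induction n as [|n IH]; intro Hg; simpl; [reflexivity|].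
  rewrite IH, (Hg (S n)); [ring | lia | intros j Hj; apply Hg; lia].
Qed.

Lemma det_first_row_unit n M :
  M 0%nat 0%nat = 1 -> (forall j, (0 < j <= n)%nat -> M 0%nat j = 0) ->
  det (S n) M = det n (minor M 0).
Proof.
  intros H00 Hrow. simpl det. rewrite sum_f_R0_head.
  - simpl. rewrite H00. ring.
  - intros j Hj. rewrite Hrow by exact Hj. ring.
Qed.

Definition obs_block (f : vec -> vec) (x : vec) : nat -> nat -> R :=
  fun r c => obs_matrix f x (S (S r)) (S (S c)).

Lemma det_obs_matrix f x : det 6 (obs_matrix f x) = det 4 (obs_block f x).
Proof.
  unfold obs_matrix.
  rewrite det_first_row_unit; [rewrite det_first_row_unit; [reflexivity| |] | |];
    intros; unfold minor; simpl; rewrite partial_coord; try reflexivity;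
    destruct j as [|[|[|[|[|[|j]]]]]]; simpl; reflexivity || lia.
Qed.

Section InductionMachine.
Variables a b c p J tau v1 v2 : R.
Hypothesis tau_neq0 : tau <> 0.
Hypothesis J_neq0 : J <> 0.
Let f := im_field a b c p J tau v1 v2.

Lemma lie_coord_im_field k : (k <= 5)%nat -> lie f (coord k) = fun y => f y k.
Proof. intro Hk. apply functional_extensionality; intro y. now apply lie_coord. Qed.

(* Expressing [L_f^2 I_s] through the components of [f] keeps the symbolic
   expansion of the 4x4 determinant below tractable. *)
Lemma lie_im_field0 :
  lie f (fun y => f y 0%nat) =
  fun y => a * f y 0%nat + f y 2%nat / tau + y 4%nat * f y 3%nat
           + y 3%nat * f y 4%nat.
Proof.
  apply functional_extensionality; intro y.
  unfold lie, f. simpl. partial_eval. unfold im_field. field. auto.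
Qed.

Lemma lie_im_field1 :
  lie f (fun y => f y 1%nat) =
  fun y => a * f y 1%nat - y 4%nat * f y 2%nat + f y 3%nat / tau
           - y 2%nat * f y 4%nat.
Proof.
  apply functional_extensionality; intro y.
  unfold lie, f. simpl. partial_eval. unfold im_field. field. auto.
Qed.

Lemma det_obs_block x :
  x 2%nat ^ 2 + x 3%nat ^ 2 <> 0 ->
  det 4 (obs_block f x) =
  p / J * (1 / tau ^ 2 + x 4%nat ^ 2) * (x 2%nat ^ 2 + x 3%nat ^ 2)
  * (dt_atan_tau_w f tau x + omega_s f x).
Proof.
  intro Hpsi.
  (* keeps [1 + (tau w)^2], the denominator of [atan'], away from 0 *)
  assert (Htw : 0 <= tau * x 4%nat * (tau * x 4%nat)) by nra.
  cbv beta iota delta [det minor Nat.ltb Nat.leb sum_f_R0 pow obs_block].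
  unfold obs_matrix, obs_fun, dt_atan_tau_w, omega_s.
  rewrite !lie_coord_im_field by lia. rewrite lie_im_field0, lie_im_field1.
  unfold lie, f. simpl sum_f_R0. partial_eval. unfold im_field.
  field. repeat split; auto; lra.
Qed.

End InductionMachine.

Lemma sum_sq_pos u v : u <> 0 \/ v <> 0 -> 0 < u ^ 2 + v ^ 2.
Proof.
  intro Huv. pose proof (pow2_ge_0 u); pose proof (pow2_ge_0 v).
  destruct Huv as [Hnz|Hnz]; pose proof (pow2_gt_0 _ Hnz); lra.
Qed.

Lemma det_obs_prefactor_pos p J tau x :
  0 < p -> 0 < J -> 0 < tau -> (x 2%nat <> 0 \/ x 3%nat <> 0) ->
  0 < p / J * (1 / tau ^ 2 + x 4%nat ^ 2) * (x 2%nat ^ 2 + x 3%nat ^ 2).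
Proof.
  intros Hp HJ Htau Hpsi.
  pose proof (sum_sq_pos _ _ Hpsi).
  assert (0 < 1 / tau ^ 2) by (apply Rdiv_lt_0_compat; [lra | apply pow_lt; lra]).
  pose proof (pow2_ge_0 (x 4%nat)); pose proof (Rdiv_lt_0_compat _ _ Hp HJ).
  apply Rmult_lt_0_compat; [apply Rmult_lt_0_compat|]; lra.
Qed.

Theorem mainTheorem8 :
  forall (R_sigma L_sigma R_s p J tau_r v1 v2 : R) (x : vec),
    0 < L_sigma -> 0 < p -> 0 < J -> 0 < tau_r ->
    let a := - R_sigma / L_sigma in
    let b := - R_s / L_sigma in
    let c := p ^ 2 / L_sigma in
    let f := im_field a b c p J tau_r v1 v2 in
    (x 2%nat <> 0 \/ x 3%nat <> 0) ->
    (det 6 (obs_matrix f x) <> 0 <->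
     dt_atan_tau_w f tau_r x + omega_s f x <> 0).
Proof.
  intros R_sigma L_sigma R_s p J tau v1 v2 x _ Hp HJ Htau a b c f Hpsi.
  pose proof (det_obs_prefactor_pos _ _ _ _ Hp HJ Htau Hpsi) as Hpos.
  pose proof (sum_sq_pos _ _ Hpsi).
  unfold f. rewrite det_obs_matrix, det_obs_block by lra.
  split; intros Hdet Hzero; apply Hdet.
  - rewrite Hzero. ring.
  - destruct (Rmult_integral _ _ Hzero); [lra | assumption].
Qed.
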